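(* For all $R\in(R_1,R_\infty)$, $\check H_c(R)$ is the unique zero of the derivative $\check x_R'$ in $\overline{\mathcal H_0(R)}$. It is a simple zero if $R\ne R_c$, and a double zero if $R=R_c$.
   Context: Let $R_1=\sqrt3$, $R_c=\sqrt7$, $R_\infty=\frac{1+3\sqrt3}2$. For $R\in(R_1,R_c]$ set $\check H_c(R)=\frac{R^2-3}2$ and $\check U_R(H)=\frac{(3-10R^2+3R^4)+(1-R^4)H-2(1-R^2)H^2-H^3}{R^2(3-R^2)^2(4-3R+R^3)^2}H$. For $R\in[R_c,R_\infty)$ set $\check H_c(R)=\frac{5+4R-R^2-\sqrt{3(5-R)(1+R)(R^2-7)}}{13+2R-2R^2}$ and $\check U_R(H)=-\frac{(13+2R-2R^2)^2H}{256(5-R)^2(4+R)^2(7-R+R^2)^2}\big(8(1+R)(5-R)(19-10R-2R^2-3(1-2R)H)+12(1-2R)(13+2R-2R^2)H^2+(13+2R-2R^2)^2H^3\big)$. ($\check H_c(R)$ is the smallest positive zero of $\check U_R'$.) Let $\check x_R(H)=\check U_R(H)/\check U_R(\check H_c(R))$, a polynomial in $H$. Let $\mathcal H_0(R)$ be the connected component of $\check x_R^{-1}(\mathbb D)$ containing $0$, where $\mathbb D$ is the open unit disk, and $\overline{\mathcal H_0(R)}$ its closure; it is known that $\check x_R$ is a conformal bijection from $\mathcal H_0(R)$ onto $\mathbb D$ extending to a homeomorphism $\overline{\mathcal H_0(R)}\to\overline{\mathbb D}$. *)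

From HB Require Import structures.
From mathcomp Require Import all_boot all_order all_algebra.
From mathcomp Require Import all_classical all_reals all_analysis.
From mathcomp Require Import complex.
Set Implicit Arguments. Unset Strict Implicit. Unset Printing Implicit Defensive.
Import Order.TTheory GRing.Theory Num.Theory.
Import numFieldNormedType.Exports.
Local Open Scope ring_scope.
Local Open Scope classical_set_scope.

(* The complex numbers over a real type R, viewed as a numClosedFieldType so
   that MathComp-Analysis equips them with the topology induced by the
   modulus (the usual topology of the complex plane). *)
Definition Cplx (R : realType) : numClosedFieldType := (R[i])%C.

Section Defs.
Variable R : realType.

Definition R_1 : R := Num.sqrt 3.
Definition R_c : R := Num.sqrt 7.
Definition R_inf : R := (1 + 3 * Num.sqrt 3) / 2.

Definition Hc (r : R) : R :=
  if r <= R_c then (r ^+ 2 - 3) / 2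
  else (5 + 4 * r - r ^+ 2
        - Num.sqrt (3 * (5 - r) * (1 + r) * (r ^+ 2 - 7)))
       / (13 + 2 * r - 2 * r ^+ 2).

Definition UR (r : R) : {poly R} :=
  if r <= R_c then
    ((r ^+ 2 * (3 - r ^+ 2) ^+ 2 * (4 - 3 * r + r ^+ 3) ^+ 2)^-1) *:
      (((3 - 10 * r ^+ 2 + 3 * r ^+ 4)%:P + (1 - r ^+ 4) *: 'X
        - (2 * (1 - r ^+ 2)) *: 'X ^+ 2 - 'X ^+ 3) * 'X)
  else
    let a := 13 + 2 * r - 2 * r ^+ 2 in
    (- (a ^+ 2 / (256 * (5 - r) ^+ 2 * (4 + r) ^+ 2
                   * (7 - r + r ^+ 2) ^+ 2))) *:
      ('X * ((8 * (1 + r) * (5 - r)) *: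
                ((19 - 10 * r - 2 * r ^+ 2)%:P - (3 * (1 - 2 * r)) *: 'X)
             + (12 * (1 - 2 * r) * a) *: 'X ^+ 2
             + (a ^+ 2) *: 'X ^+ 3)).

Definition xR (r : R) : {poly R} := ((UR r).[Hc r])^-1 *: UR r.

Definition xC (r : R) : {poly Cplx R} := map_poly (real_complex R) (xR r).

Definition H0 (r : R) : set (Cplx R) :=
  connected_component [set z : Cplx R | `|(xC r).[z]| < 1] 0.

End Defs.

Arguments R_1 {R}.
Arguments R_c {R}.
Arguments R_inf {R}.

(* For R in (R_1, R_inf), U_R is a nonzero multiple of the quartic
   Q(H) = phi(H - h) - phi(-h),  phi(w) = 3 w^4 - 4 s w^3 + 6 p w^2,
   with h = H_c(R) > 0, s > 0 and p >= 0, where p = 0 exactly when R = R_c.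
   Hence x_R = 1 - phi(H - h) / phi(-h) and
   x_R' is proportional to (H - h) ((H - h)^2 - s (H - h) + p).
   The segment [0, h) lies in x_R^-1(D), so h is in the closure of H_0.  On the
   two rays from h at angle pi/3 to the negative axis Re phi <= 0, i.e.
   Re x_R >= 1, so the connected set H_0 stays inside the open sector they bound.
   Since s, p >= 0, the only root of w^2 - s w + p in the closed sector is
   w = 0, which leaves h as the only critical point in the closure; it
   is simple when p <> 0, and double when p = 0 since then the cubic factor is
   (H - h)^2 (H - h - s). *)

From HB Require Import structures.
From mathcomp Require Import all_boot all_order all_algebra.
From mathcomp Require Import all_classical all_reals all_analysis.
From mathcomp Require Import complex.
From mathcomp Require Import ring lra.
Import Order.TTheory GRing.Theory Num.Theory.
Import numFieldNormedType.Exports.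
Local Open Scope ring_scope.
Local Open Scope classical_set_scope.
Local Open Scope complex_scope.

Local Notation cRe := (@complex.Re _).
Local Notation cIm := (@complex.Im _).

Section Quartic.
Context {F : comNzRingType}.
Implicit Types h s p w z : F.

Definition quartic s p w : F := 3 * w ^+ 4 - 4 * s * w ^+ 3 + 6 * p * w ^+ 2.

Definition quartic_poly h s p : {poly F} :=
  3%:P * 'X^4 - (12 * h + 4 * s)%:P * 'X^3
  + (18 * h ^+ 2 + 12 * s * h + 6 * p)%:P * 'X^2
  - (12 * (h ^+ 3 + s * h ^+ 2 + p * h))%:P * 'X.

Lemma horner_quartic_poly h s p z :
  (quartic_poly h s p).[z] = quartic s p (z - h) - quartic s p (- h).
Proof.
rewrite /quartic_poly /quartic.
by rewrite !(hornerD, hornerN, hornerM, hornerXn, hornerX, hornerC); ring.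
Qed.

Lemma horner_quartic_poly_vertex h s p :
  (quartic_poly h s p).[h] = - quartic s p (- h).
Proof. by rewrite horner_quartic_poly subrr /quartic; ring. Qed.

Lemma deriv_quartic_poly h s p : deriv (quartic_poly h s p) =
  12%:P * (('X - h%:P) * (('X - h%:P) ^+ 2 - s%:P * ('X - h%:P) + p%:P)).
Proof.
rewrite /quartic_poly !(derivD, derivB, derivN, deriv_mulC, derivXn, derivX, derivC).
by ring.
Qed.

End Quartic.

Lemma rmorph_quartic (F G : comNzRingType) (f : {rmorphism F -> G}) (s p w : F) :
  f (quartic s p w) = quartic (f s) (f p) (f w).
Proof.
by rewrite /quartic !(rmorph_nat, rmorphD, rmorphN, rmorphM, rmorphXn, rmorph1); ring.
Qed.

Lemma map_quartic_poly (F G : comNzRingType) (f : {rmorphism F -> G}) (h s p : F) :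
  map_poly f (quartic_poly h s p) = quartic_poly (f h) (f s) (f p).
Proof.
apply/polyP => i; rewrite coef_map /quartic_poly.
rewrite !(coefD, coefB, coefN, coefCM, coefXn, coefX) /=.
by case: i => [|[|[|[|[|i]]]]] /=;
  rewrite ?(rmorphD, rmorphN, rmorphM, rmorphXn, rmorph_nat, rmorph0) //; ring.
Qed.

Section NormalizedQuartic.
Context {F : fieldType}.
Implicit Types h s p z : F.

Definition xquartic h s p : {poly F} :=
  - (quartic s p (- h))^-1 *: quartic_poly h s p.

Lemma horner_xquartic h s p z : quartic s p (- h) != 0 ->
  (xquartic h s p).[z] = 1 - quartic s p (z - h) / quartic s p (- h).
Proof. by move=> N0; rewrite hornerZ horner_quartic_poly; field. Qed.

Lemma deriv_xquartic h s p : deriv (xquartic h s p) =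
  (- 12 / quartic s p (- h)) *:
    (('X - h%:P) * (('X - h%:P) ^+ 2 - s%:P * ('X - h%:P) + p%:P)).
Proof.
by rewrite derivZ deriv_quartic_poly -!mul_polyC polyCM !polyCN; ring.
Qed.

End NormalizedQuartic.

Lemma map_xquartic (F G : fieldType) (f : {rmorphism F -> G}) (h s p : F) :
  map_poly f (xquartic h s p) = xquartic (f h) (f s) (f p).
Proof.
by rewrite map_polyZ map_quartic_poly rmorphN fmorphV rmorph_quartic rmorphN.
Qed.

Lemma mupZ (F : fieldType) (x c : F) (q : {poly F}) :
  c != 0 -> mup x (c *: q) = mup x q.
Proof. by move=> c0; rewrite -mul_polyC mupMr // rootC. Qed.

Section Multiplicity.
Context {F : numFieldType}.
Implicit Types h s p : F.

Lemma mup_deriv_xquartic h s p : quartic s p (- h) != 0 -> p != 0 ->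
  mup h (deriv (xquartic h s p)) = 1%N.
Proof.
move=> N0 p0; rewrite deriv_xquartic mupZ; last by rewrite mulf_neq0 ?invr_eq0.
rewrite mupMl; first by rewrite -[X in mup _ X]expr1 mup_XsubCX eqxx.
by rewrite /root !hornerE subrr expr0n /= mulr0 !subr0 add0r.
Qed.

Lemma mup_deriv_xquartic0 h s : quartic s 0 (- h) != 0 -> s != 0 ->
  mup h (deriv (xquartic h s 0)) = 2%N.
Proof.
move=> N0 s0; rewrite deriv_xquartic mupZ; last by rewrite mulf_neq0 ?invr_eq0.
have -> : ('X - h%:P) * (('X - h%:P) ^+ 2 - s%:P * ('X - h%:P) + 0%:P) =
    ('X - h%:P) ^+ 2 * ('X - (h + s)%:P) by rewrite polyCD; ring.
rewrite mupMl; first by rewrite mup_XsubCX eqxx.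
by rewrite /root !hornerE opprD addrA subrr add0r oppr_eq0.
Qed.

End Multiplicity.

Lemma quartic_neg_le {F : realFieldType} (s p u v : F) :
  0 <= s -> 0 <= p -> 0 < u <= v -> 0 < quartic s p (- u) <= quartic s p (- v).
Proof.
move=> s0 p0 /andP[u0 uv]; have v0 := lt_le_trans u0 uv.
have quarticN x : quartic s p (- x) = 3 * x ^+ 4 + 4 * (s * x ^+ 3) + 6 * (p * x ^+ 2).
  by rewrite /quartic; ring.
have mono n : u ^+ n <= v ^+ n by rewrite lerXn2r // ?nnegrE ltW.
have u4 : 0 < u ^+ 4 by rewrite exprn_gt0.
have su0 : 0 <= s * u ^+ 3 by rewrite mulr_ge0 // exprn_ge0 // ltW.
have pu0 : 0 <= p * u ^+ 2 by rewrite mulr_ge0 // exprn_ge0 // ltW.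
have su : s * u ^+ 3 <= s * v ^+ 3 by rewrite ler_wpM2l.
have pu : p * u ^+ 2 <= p * v ^+ 2 by rewrite ler_wpM2l.
have := mono 4%N; rewrite !quarticN; lra.
Qed.

Lemma quartic_neg_gt0 {F : realFieldType} (s p h : F) :
  0 <= s -> 0 <= p -> 0 < h -> 0 < quartic s p (- h).
Proof.
move=> s0 p0 h0.
by have /(_ _)/andP[] // := quartic_neg_le s p h h s0 p0; rewrite h0 lexx.
Qed.

Section ClosureSign.
Context {T : topologicalType} {R : realType} {g : T -> R}.
Hypothesis g_cont : continuous g.

Lemma closure_ltr0 : closure [set x | g x < 0] `<=` [set x | g x <= 0].
Proof.
have /closure_id -> : closed [set x | g x <= 0].
  apply: (@preimage_closed _ _ g [set y | y <= 0]) => [x _|]; last exact: closed_le.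
  exact: g_cont.
by apply: closureS => x /ltW.
Qed.

Lemma closure_gtr0 : closure [set x | 0 < g x] `<=` [set x | 0 <= g x].
Proof.
have /closure_id -> : closed [set x | 0 <= g x].
  apply: (@preimage_closed _ _ g [set y | 0 <= y]) => [x _|]; last exact: closed_ge.
  exact: g_cont.
by apply: closureS => x /ltW.
Qed.

Lemma separated_sign : separated [set x | g x < 0] [set x | 0 < g x].
Proof.
split; apply/seteqP; split=> // x [].
  by move=> /closure_ltr0 /= gx0 /= gx; lra.
by move=> /= gx /closure_gtr0 /= gx0; lra.
Qed.

End ClosureSign.

Section ComplexPlane.
Context {R : realType}.
Implicit Types (x : R) (z w : Cplx R).

Lemma normc_real x : `|x%:C| = `|x|%:C :> Cplx R.
Proof. by rewrite normc_def /= expr0n /= addr0 sqrtr_sqr. Qed.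

Lemma real_complex_continuous : continuous (real_complex R : R -> Cplx R).
Proof.
move=> x; apply/cvgrPdist_lt => e; rewrite ltcE /= => /andP[/eqP e_real e0].
apply/nbhs_ballP; exists (cRe e) => // y; rewrite /ball /= => xy.
by rewrite -rmorphB normc_real ltcE /= e_real eqxx.
Qed.

Lemma normc_ge_Im z : `|cIm z|%:C <= `|z|.
Proof.
rewrite normc_def lecR -sqrtr_sqr; apply: ler_wsqrtr.
by rewrite lerDr sqr_ge0.
Qed.

Lemma continuous_nonexpansive (g : Cplx R -> R) :
  (forall z w, `|g z - g w|%:C <= `|z - w|) -> continuous g.
Proof.
move=> g1 z; apply/(cvgrPdist_lt (FF := nbhs_filter z)) => e e0.
apply/nbhs_ballP; exists e%:C; first by rewrite /= ltcR.
by move=> w /(le_lt_trans (g1 z w)); rewrite ltcR.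
Qed.

Lemma Re_continuous : continuous (cRe : Cplx R -> R).
Proof.
apply: continuous_nonexpansive => -[a b] [c d].
exact: (normc_ge_Re ((a - c) +i* (b - d))).
Qed.

Lemma Im_continuous : continuous (cIm : Cplx R -> R).
Proof.
apply: continuous_nonexpansive => -[a b] [c d].
exact: (normc_ge_Im ((a - c) +i* (b - d))).
Qed.

(* wedge w < 0 iff w lies in the open sector |arg (- w)| < pi / 3. *)
Definition wedge w : R := Num.sqrt 3 * cRe w + `|cIm w|.

Lemma wedge_continuous : continuous wedge.
Proof.
move=> w; apply: (cvgD (FF := nbhs_filter w)).
  exact: (cvgMl_tmp (FF := nbhs_filter w) (Re_continuous w)).
exact: (continuous_comp (Im_continuous w) (@norm_continuous _ R^o _)).
Qed.

End ComplexPlane.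

Section Wedge.
Context {R : realType}.
Implicit Types (s p a y : R) (w : Cplx R).

Lemma sqrt3_gt0 : 0 < Num.sqrt 3 :> R.
Proof. by rewrite sqrtr_gt0. Qed.

Lemma wedge_eq0 w : wedge w = 0 -> cRe w <= 0 /\ cIm w ^+ 2 = 3 * cRe w ^+ 2.
Proof.
rewrite /wedge => w0; have s3 := sqrt3_gt0.
have normIm : `|cIm w| = - (Num.sqrt 3 * cRe w) by lra.
split; last by rewrite -real_normK ?num_real // normIm sqrrN exprMn sqr_sqrtr.
have : 0 <= - (Num.sqrt 3 * cRe w) by rewrite -normIm.
by rewrite oppr_ge0 pmulr_rle0.
Qed.

(* On the boundary rays w = a (1 +- i sqrt 3), a <= 0, the powers w^2, w^3, w^4
   have real parts -2a^2, -8a^3, -8a^4, so every term of Re (quartic s p w)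
   is nonpositive. *)
Lemma Re_quartic_wedge_boundary s p a y : 0 <= s -> 0 <= p -> a <= 0 ->
  y ^+ 2 = 3 * a ^+ 2 -> cRe (quartic s%:C p%:C (a +i* y)) <= 0.
Proof.
move=> s0 p0 a0 ya.
have -> : cRe (quartic s%:C p%:C (a +i* y)) =
    - 24 * a ^+ 4 + 32 * (s * a ^+ 3) - 12 * (p * a ^+ 2).
  have y4 : y ^+ 4 = (y ^+ 2) ^+ 2 by rewrite -exprM.
  transitivity (3 * (a ^+ 4 - 6 * a ^+ 2 * y ^+ 2 + y ^+ 4)
      - 4 * s * (a ^+ 3 - 3 * a * y ^+ 2) + 6 * p * (a ^+ 2 - y ^+ 2)).
    by rewrite /quartic !exprS !expr0 /=; simpc; ring.
  by rewrite y4 ya; ring.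
have a4 : 0 <= a ^+ 4 by rewrite exprn_even_ge0.
have sa3 : s * a ^+ 3 <= 0 by rewrite mulr_ge0_le0 // exprS mulr_le0_ge0 // sqr_ge0.
have pa2 : 0 <= p * a ^+ 2 by rewrite mulr_ge0 // sqr_ge0.
lra.
Qed.

Lemma wedge_quadratic_root s p w : 0 <= s -> 0 <= p -> wedge w <= 0 ->
  w ^+ 2 - s%:C * w + p%:C = 0 -> w = 0.
Proof.
case: w => a y; rewrite /wedge /= => s0 p0 wedge_le0 eq0.
have := congr1 cRe eq0; have := congr1 cIm eq0.
rewrite !exprS !expr0 /=; simpc => eqIm eqRe.
have s3 := sqrt3_gt0.
have [y0 | a_half] : y = 0 \/ 2 * a = s.
  have : y * (2 * a - s) = 0 by rewrite -eqIm; ring.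
  by move/eqP; rewrite mulf_eq0 subr_eq0 => /orP[] /eqP; [left | right].
- move: eqRe wedge_le0; rewrite y0 normr0 addr0 pmulr_rle0 // => eqRe a0.
  have sa : s * a <= 0 by rewrite mulr_ge0_le0.
  have a2 : a ^+ 2 <= 0 by rewrite expr2; lra.
  have : a ^+ 2 == 0 by rewrite eq_le a2 sqr_ge0.
  by rewrite sqrf_eq0 => /eqP ->.
- have a_ge0 : 0 <= Num.sqrt 3 * a by apply: mulr_ge0; [exact: ltW | lra].
  have /eqP : `|y| = 0 by have := normr_ge0 y; lra.
  have /eqP : Num.sqrt 3 * a = 0 by have := normr_ge0 y; lra.
  by rewrite mulf_eq0 (gt_eqF s3) normr_eq0 => /eqP -> /eqP ->.
Qed.

End Wedge.

Section Sector.
Context {R : realType}.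
Variables h s p : R.
Hypotheses (h_gt0 : 0 < h) (s_ge0 : 0 <= s) (p_ge0 : 0 <= p).

Let N := quartic s p (- h).
Let f : {poly Cplx R} := xquartic h%:C s%:C p%:C.
Let S := [set z : Cplx R | `|f.[z]| < 1].

Let N_gt0 : 0 < N.
Proof. exact: quartic_neg_gt0. Qed.

Let NC : quartic s%:C p%:C (- h%:C) = N%:C.
Proof. by rewrite -rmorphN rmorph_quartic. Qed.

Let NC_neq0 : quartic s%:C p%:C (- h%:C) != 0.
Proof. by rewrite NC eq_complex /= gt_eqF. Qed.

Lemma horner_xquartic_real t : f.[t%:C] = (1 - quartic s p (t - h) / N)%:C.
Proof. by rewrite /f -map_xquartic horner_map horner_xquartic // gt_eqF. Qed.

Lemma segment_sub_sublevel t : 0 <= t < h -> S t%:C.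
Proof.
case/andP => t0 th; rewrite /S /= horner_xquartic_real normc_real ltcR.
have /andP[q0 qN] : 0 < quartic s p (- (h - t)) <= N.
  by apply: quartic_neg_le => //; rewrite subr_gt0 th gerBl.
rewrite opprB in q0 qN.
have q_gt0 : 0 < quartic s p (t - h) / N by rewrite divr_gt0.
have q_le1 : quartic s p (t - h) / N <= 1 by rewrite ler_pdivrMr // mul1r.
by rewrite ger0_norm; lra.
Qed.

Lemma segment_sub_component t : 0 <= t < h -> connected_component S 0 t%:C.
Proof.
move=> /andP[t0 th].
have : [set (x%:C : Cplx R) | x in `[0, t]] `<=` connected_component S 0.
  apply: connected_component_max.
  - by exists 0 => //; rewrite /= in_itv /= lexx t0.
  - move=> _ [y + <-]; rewrite /= in_itv /= => /andP[y0 yt].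
    by apply: segment_sub_sublevel; rewrite y0 (le_lt_trans yt th).
  - apply: connected_continuous_connected; first exact: segment_connected.
    exact/continuous_subspaceT/real_complex_continuous.
by apply; exists t => //; rewrite /= in_itv /= lexx t0.
Qed.

Lemma vertex_in_closure : closure (connected_component S 0) h%:C.
Proof.
move=> B /nbhs_ballP [e /=]; rewrite ltcE /= => /andP[/eqP e_real e0] eB.
set t := Num.max 0 (h - cRe e / 2).
have t0 : 0 <= t by rewrite le_max lexx.
have th : t < h by rewrite gt_max h_gt0 /=; lra.
have ht : h - cRe e / 2 <= t by rewrite le_max lexx orbT.
exists t%:C; split; first by apply: segment_sub_component; rewrite t0 th.
apply: eB; rewrite /ball /= -rmorphB normc_real ltcE /= e_real eqxx /=.
by rewrite ger0_norm; lra.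
Qed.

Lemma wedge_boundary_notin z : wedge (z - h%:C) = 0 -> ~ S z.
Proof.
move=> /wedge_eq0 [a0 ya]; rewrite /S /= horner_xquartic // NC.
have : cRe (quartic s%:C p%:C (z - h%:C)) <= 0.
  by case: (z - h%:C) a0 ya => a y; exact: Re_quartic_wedge_boundary.
case: (quartic _ _ _) => u v /= u0.
have Re_ge1 : 1 <= cRe (1 - (u +i* v) / N%:C).
  simpc => /=; rewrite lerDl oppr_ge0 mulr_le0_ge0 // divr_ge0 // ?ltW //.
  by rewrite expr0n addr0 exprn_gt0.
move=> /(le_lt_trans (normc_ge_Re _)); rewrite -[X in _ < X]/(1%:C) ltcR.
by have := ler_norm (cRe (1 - (u +i* v) / N%:C)); lra.
Qed.

Let shifted_wedge (z : Cplx R) : R := wedge (z - h%:C).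

Let shifted_wedge_continuous : continuous shifted_wedge.
Proof.
move=> z; apply: continuous_comp (wedge_continuous _).
exact: (cvgB (FF := nbhs_filter z) cvg_id (cvg_cst _)).
Qed.

Lemma component_sub_wedge : connected_component S 0 `<=` [set z | shifted_wedge z < 0].
Proof.
have cover : connected_component S 0 `<=`
    [set z | shifted_wedge z < 0] `|` [set z | 0 < shifted_wedge z].
  move=> z /connected_component_sub Sz.
  have [neg|pos|zero] := ltgtP (shifted_wedge z) 0; [by left | by right |].
  by case: (wedge_boundary_notin _ zero Sz).
have [//|pos] := connected_subset (separated_sign shifted_wedge_continuous) cover
  (@component_connected _ S 0).
have S0 : S 0 by have := @segment_sub_sublevel 0; rewrite lexx h_gt0; apply.
have := pos _ (connected_component_refl S0).
rewrite /= /shifted_wedge /wedge /= subrr normr0 addr0 sub0r mulrN oppr_gt0.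
by rewrite pmulr_rlt0 ?sqrt3_gt0 // ltNge (ltW h_gt0).
Qed.

Lemma closure_component_sub_wedge :
  closure (connected_component S 0) `<=` [set z | shifted_wedge z <= 0].
Proof.
by move=> z /(closureS component_sub_wedge) /(closure_ltr0 shifted_wedge_continuous).
Qed.

Lemma critical_point_closure z :
  closure (connected_component S 0) z -> root (deriv f) z -> z = h%:C.
Proof.
move=> /closure_component_sub_wedge wz.
rewrite deriv_xquartic rootZ; last by rewrite mulf_neq0 ?invr_eq0.
rewrite rootM root_XsubC => /orP[/eqP //|]; rewrite /root !hornerE => /eqP.
by move/(wedge_quadratic_root _ _ _ s_ge0 p_ge0 wz)/eqP; rewrite subr_eq0 => /eqP.
Qed.

Lemma mup_vertex_simple : p != 0 -> mup h%:C (deriv f) = 1%N.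
Proof.
by move=> p0; apply: mup_deriv_xquartic; rewrite // eq_complex /= eqxx andbT.
Qed.

Lemma mup_vertex_double : p = 0 -> s != 0 -> mup h%:C (deriv f) = 2%N.
Proof.
move: NC_neq0; rewrite /f => + p0; rewrite p0 rmorph0 => N0 s0.
by apply: mup_deriv_xquartic0; rewrite // eq_complex /= eqxx andbT.
Qed.

End Sector.

Section NormalForm.
Context {R : realType}.
Implicit Types r s p : R.

Definition normal_form r s p :=
  [/\ 0 < Hc r, 0 < s, 0 <= p, (p == 0) = (r == R_c)
    & exists2 K, K != 0 & UR r = K *: quartic_poly (Hc r) s p].

Lemma xR_normal_form {r s p} : normal_form r s p -> xR r = xquartic (Hc r) s p.
Proof.
case=> h0 s0 p0 _ [K K0 UR_eq].
have N0 : quartic s p (- Hc r) != 0 by rewrite gt_eqF // quartic_neg_gt0 // ltW.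
rewrite /xR UR_eq hornerZ horner_quartic_poly_vertex scalerA /xquartic.
by congr (_ *: _); field; rewrite K0 N0.
Qed.

Section BelowRc.
Variable r : R.
Hypothesis r_range : R_1 < r <= R_c.

Let k := (r ^+ 2 * (3 - r ^+ 2) ^+ 2 * (4 - 3 * r + r ^+ 3) ^+ 2)^-1.

Let UR_eq :
  UR r = (- k / 3) *:
    quartic_poly ((r ^+ 2 - 3) / 2) 3 ((7 - r ^+ 2) * (r ^+ 2 + 1) / 4).
Proof.
case/andP: r_range => _ rc; rewrite /UR rc -/k /quartic_poly.
apply/polyP => i.
rewrite !(coefZ, coefD, coefB, coefN, coefMX, coefCM, coefXn, coefX, coefC).
by case: i => [|[|[|[|[|i]]]]] /=; field.
Qed.

Lemma normal_form_le_Rc : normal_form r 3 ((7 - r ^+ 2) * (r ^+ 2 + 1) / 4).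
Proof.
case/andP: r_range; rewrite /R_1 /R_c => r1 rc.
have sqrt3 : Num.sqrt 3 ^+ 2 = 3 :> R by rewrite sqr_sqrtr.
have sqrt7 : Num.sqrt 7 ^+ 2 = 7 :> R by rewrite sqr_sqrtr.
have r0 : 0 < r by apply: le_lt_trans r1; exact: sqrtr_ge0.
have r2_gt3 : 3 < r ^+ 2 by have := sqrtr_ge0 (3 : R); nra.
have r2_le7 : r ^+ 2 <= 7 by have := sqrtr_ge0 (7 : R); nra.
rewrite /normal_form; have -> : Hc r = (r ^+ 2 - 3) / 2 by rewrite /Hc /R_c rc.
split.
- lra.
- lra.
- by apply: divr_ge0 => //; apply: mulr_ge0; lra.
- apply/idP/idP; last by move/eqP => ->; rewrite sqrt7 subrr !mul0r.
  rewrite !mulf_eq0 !invr_eq0 /= => /orP[/orP[] /eqP|] p0; try lra.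
  apply/eqP; rewrite -(ger0_norm (ltW r0)) -sqrtr_sqr; congr Num.sqrt; lra.
- exists (- k / 3); last exact: UR_eq.
  have cubic_gt0 : 0 < 4 - 3 * r + r ^+ 3.
    have : 0 < r * (r ^+ 2 - 3) by rewrite mulr_gt0 // subr_gt0.
    by rewrite exprS; lra.
  have sq_gt0 : 0 < (3 - r ^+ 2) ^+ 2.
    by rewrite exprn_even_gt0 //= subr_eq0 lt_eqF.
  have k0 : 0 < k.
    by rewrite invr_gt0; apply: mulr_gt0; [apply: mulr_gt0|]; rewrite // exprn_gt0.
  by apply: ltr0_neq0; rewrite mulNr oppr_lt0 divr_gt0.
Qed.

End BelowRc.

Section AboveRc.
Variable r : R.
Hypothesis r_range : R_c < r < R_inf.

Let a := 13 + 2 * r - 2 * r ^+ 2.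
Let q := 5 + 4 * r - r ^+ 2.
Let D := 3 * (5 - r) * (1 + r) * (r ^+ 2 - 7).
(* h and h' are the roots of a H^2 - 2 q H + 2 q; the critical points of U_R
   are h, h' and L, whence the parameters s = (L - h) + (h' - h) and
   p = (L - h) (h' - h) of its normal form. *)
Let h := Hc r.
Let h' := 2 * q / a - h.
Let L := (2 * r ^+ 2 + 10 * r - 19) / a.

Let bounds : [/\ 2 < r, r < 5, 7 < r ^+ 2, 0 < a & 0 < q].
Proof.
case/andP: r_range; rewrite /R_c /R_inf => rc ri.
have sqrt3 : Num.sqrt 3 ^+ 2 = 3 :> R by rewrite sqr_sqrtr.
have sqrt7 : Num.sqrt 7 ^+ 2 = 7 :> R by rewrite sqr_sqrtr.
have s30 := sqrtr_ge0 (3 : R); have s70 := sqrtr_ge0 (7 : R).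
have r2 : 2 < r by nra.
have r5 : r < 5 by nra.
split => //; first by nra.
- have : 0 < ((1 + 3 * Num.sqrt 3) / 2 - r) * (r - (1 - 3 * Num.sqrt 3) / 2).
    by apply: mulr_gt0; lra.
  by rewrite /a; nra.
- have -> : q = (5 - r) * (1 + r) by rewrite /q; ring.
  by apply: mulr_gt0; lra.
Qed.

Let sqrtD := Num.sqrt D.

Let sqrtD_sqr : sqrtD ^+ 2 = q ^+ 2 - 2 * q * a.
Proof.
have [r2 r5 r7 _ _] := bounds.
rewrite sqr_sqrtr; first by rewrite /D /q /a; ring.
by rewrite /D !mulr_ge0 //; lra.
Qed.

Let sqrtD_bounds : 0 < sqrtD < q.
Proof.
have [r2 r5 r7 a0 q0] := bounds.
have D0 : 0 < D by rewrite /D !mulr_gt0 //; lra.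
have sqrtD0 : 0 < sqrtD by rewrite sqrtr_gt0.
rewrite sqrtD0 /=.
have : 0 < 2 * q * a by rewrite !mulr_gt0.
by have := sqrtD_sqr; nra.
Qed.

Let Hc_eq : h = (q - sqrtD) / a.
Proof.
case/andP: r_range => rc _.
by rewrite /h /Hc leNgt rc.
Qed.

Let h_root : a * h ^+ 2 - 2 * q * h + 2 * q = 0.
Proof.
have [_ _ _ a0 _] := bounds.
rewrite Hc_eq; apply: (@mulfI _ a); first by rewrite gt_eqF.
rewrite mulr0; transitivity (sqrtD ^+ 2 - (q ^+ 2 - 2 * q * a)); last first.
  by rewrite sqrtD_sqr subrr.
by field; rewrite gt_eqF.
Qed.

Let kap :=
  - (a ^+ 2 / (256 * (5 - r) ^+ 2 * (4 + r) ^+ 2 * (7 - r + r ^+ 2) ^+ 2)).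

Let UR_eq :
  UR r = (kap * a ^+ 2 / 3) *: quartic_poly h (L - h + (h' - h)) ((L - h) * (h' - h)).
Proof.
have [_ _ _ a0 _] := bounds; have a_neq0 : a != 0 by rewrite gt_eqF.
case/andP: r_range => rc _.
rewrite /UR leNgt rc /= -/a -/kap /quartic_poly /L /h'.
apply/polyP => i.
rewrite !(coefZ, coefD, coefB, coefN, coefXM, coefMX, coefCM, coefXn, coefX, coefC).
case: i => [|[|[|[|[|i]]]]] /=; try by rewrite /q; field.
- apply/eqP; rewrite -subr_eq0; apply/eqP.
  transitivity (- 4 * kap * (2 * r ^+ 2 + 10 * r - 19)
                * (a * h ^+ 2 - 2 * q * h + 2 * q)).
    by rewrite /a /q; field.
  by rewrite h_root mulr0.
- apply/eqP; rewrite -subr_eq0; apply/eqP.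
  transitivity (2 * kap * a * (a * h ^+ 2 - 2 * q * h + 2 * q)).
    by rewrite /a /q; field.
  by rewrite h_root mulr0.
Qed.

Let L_gt_h : 0 < L - h.
Proof.
have [r2 _ _ a0 _] := bounds; have [sqrtD0 _] := andP sqrtD_bounds.
have -> : L - h = (3 * (r - 2) * (r + 4) + sqrtD) / a.
  by rewrite /L Hc_eq /q; field; rewrite gt_eqF.
by rewrite divr_gt0 // ltr_wpDr ?ltW // !mulr_gt0 //; lra.
Qed.

Let h'_gt_h : 0 < h' - h.
Proof.
have [_ _ _ a0 _] := bounds; have [sqrtD0 _] := andP sqrtD_bounds.
have -> : h' - h = 2 * sqrtD / a by rewrite /h' Hc_eq; field; rewrite gt_eqF.
by rewrite !divr_gt0 ?mulr_gt0.
Qed.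

Lemma normal_form_gt_Rc : normal_form r (L - h + (h' - h)) ((L - h) * (h' - h)).
Proof.
have [r2 r5 _ a0 _] := bounds; have [sqrtD0 sqrtD_q] := andP sqrtD_bounds.
case/andP: r_range => rc _.
split.
- by rewrite -/h Hc_eq divr_gt0 // subr_gt0.
- by rewrite addr_gt0.
- by rewrite mulr_ge0 // ltW.
- by rewrite gt_eqF ?mulr_gt0 // gt_eqF.
exists (kap * a ^+ 2 / 3); last exact: UR_eq.
have kap_lt0 : kap < 0.
  rewrite /kap oppr_lt0 divr_gt0 ?exprn_gt0 //.
  apply: mulr_gt0; [apply: mulr_gt0; [apply: mulr_gt0|]|];
    by rewrite ?exprn_gt0 //; nra.
by apply: ltr0_neq0; rewrite -mulrA nmulr_rlt0 // divr_gt0 // exprn_gt0.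
Qed.

End AboveRc.

Lemma normal_formP {r} : R_1 < r < R_inf -> exists s p, normal_form r s p.
Proof.
case/andP => r1 ri; case: (lerP r R_c) => rc.
  by do 2 eexists; apply: normal_form_le_Rc; rewrite r1 rc.
by do 2 eexists; apply: normal_form_gt_Rc; rewrite rc ri.
Qed.

End NormalForm.

Theorem lemma13 (R : realType) (r : R) :
  R_1 < r < R_inf ->
  let Hcc : Cplx R := real_complex R (Hc r) in
  [/\ closure (H0 r) Hcc,
      (forall z : Cplx R, closure (H0 r) z -> root (xC r)^`() z -> z = Hcc),
      (r != R_c -> mup Hcc (xC r)^`() = 1%N) &
      (r = R_c -> mup Hcc (xC r)^`() = 2%N)].
Proof.
move=> r_range Hcc; have [s [p nf]] := normal_formP r_range.
have xC_eq : xC r = xquartic (Hc r)%:C s%:C p%:C.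
  by rewrite /xC (xR_normal_form nf) map_xquartic.
case: nf => h0 s0 p0 p0_iff _; have s0' := ltW s0.
rewrite /H0 xC_eq /Hcc; split.
- exact: vertex_in_closure.
- exact: critical_point_closure.
- by move=> rc; apply: mup_vertex_simple => //; rewrite p0_iff.
- move=> rc; apply: mup_vertex_double; rewrite ?gt_eqF //.
  by apply/eqP; rewrite p0_iff rc.
Qed.
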